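(* Let $n\ge 5$ and let $f$ be an RDF of $P(n,2)$ of weight $\gamma_R(P(n,2))$ with $|V_2|$ minimum among all such minimum-weight RDFs. For any index $i$, if $r_f(V'(i,7)) = 0.5$, then either $r_f(V'(i-7,7))\ge 1$ and $r_f(V'(i+7,7))\ge 1.5$, or $r_f(V'(i-7,7))\ge 1.5$ and $r_f(V'(i+7,7))\ge 1$.
   Context: For integers $n \ge 3$ and $1 \le k < n/2$, the generalized Petersen graph $P(n,k)$ has vertex set $\{v_i, u_i : 0 \le i \le n-1\}$ and edge set $\{v_iv_{i+1},\ v_iu_i,\ u_iu_{i+k} : 0 \le i \le n-1\}$, with subscripts taken modulo $n$. A Roman domination function (RDF) of a graph $G$ is a function $f: V(G)\to\{0,1,2\}$ such that every vertex $u$ with $f(u)=0$ is adjacent to at least one vertex $v$ with $f(v)=2$. Its weight is $\sum_{u\in V(G)} f(u)$; $\gamma_R(G)$ is the minimum weight of an RDF of $G$. For an RDF $f$ write $V_i=\{w: f(w)=i\}$, $i=0,1,2$. Define $g_f(w)=0.5$ if $w\in V_2$, $g_f(w)=1$ if $w\in V_1$, and $g_f(w)=0.5\,|N(w)\cap V_2|$ if $w\in V_0$, where $N(w)$ is the set of neighbors of $w$. Let $r_f(w)=g_f(w)-0.5$ and, for $S\subseteq V(P(n,2))$, $r_f(S)=\sum_{w\in S} r_f(w)$. For an integer $i$ and $t\ge 1$, $V'(i,t)=\{v_j,u_j : i\le j\le i+t-1\}$ (subscripts modulo $n$). *)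

From HB Require Import structures.
From mathcomp Require Import all_boot all_order all_algebra.
Import Order.TTheory GRing.Theory Num.Theory.

(* Vertices of P(n,k): (false, i) is v_i, (true, i) is u_i, for i : 'I_n. *)
Definition pvert (n : nat) : finType := (bool * 'I_n)%type.

(* Edges v_i v_{i+1}, v_i u_i, u_i u_{i+k} (subscripts mod n). *)
Definition gp_adj (n k : nat) (x y : pvert n) : bool :=
  let: (bx, i) := x in let: (by_, j) := y in
  if bx == by_ then
    let d := if bx then k else 1%N in
    (val j == (val i + d) %% n) || (val i == (val j + d) %% n)
  else val i == val j.

Definition P2adj (n : nat) (x y : pvert n) : bool := gp_adj n 2 x y.

Definition is_RDF (n : nat) (f : pvert n -> nat) : Prop :=
  forall w, f w <= 2 /\ (f w = 0 -> exists w', P2adj n w w' /\ f w' = 2).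

Definition weight (n : nat) (f : pvert n -> nat) : nat := \sum_(w : pvert n) f w.

Definition Vset (n : nat) (f : pvert n -> nat) (a : nat) : {set pvert n} :=
  [set w | f w == a].

Definition is_gammaR_RDF (n : nat) (f : pvert n -> nat) : Prop :=
  is_RDF n f /\ forall g, is_RDF n g -> weight n f <= weight n g.

Definition is_min_RDF_minV2 (n : nat) (f : pvert n -> nat) : Prop :=
  is_gammaR_RDF n f /\
  forall g, is_gammaR_RDF n g -> #|Vset n f 2| <= #|Vset n g 2|.

Local Open Scope ring_scope.

Definition g_f (n : nat) (f : pvert n -> nat) (w : pvert n) : rat :=
  if f w == 2%N then 1 / 2
  else if f w == 1%N then 1
  else (#|[set w' | P2adj n w w' && (w' \in Vset n f 2)]|)%:R / 2.

Definition r_f (n : nat) (f : pvert n -> nat) (w : pvert n) : rat := g_f n f w - 1 / 2.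

Definition r_fS (n : nat) (f : pvert n -> nat) (S : {set pvert n}) : rat :=
  \sum_(w in S) r_f n f w.

(* V'(i,t) = {v_j, u_j : i <= j <= i+t-1}, subscripts mod n, i an integer. *)
Definition Vp (n : nat) (i : int) (t : nat) : {set pvert n} :=
  [set w : pvert n | [exists k : 'I_t,
      ((nat_of_ord w.2)%:Z == i + (nat_of_ord k)%:Z %[mod (n : int)])%Z]].

From HB Require Import structures.
From mathcomp Require Import all_boot all_order all_algebra.
From mathcomp Require Import zify lra.
Import Order.TTheory GRing.Theory Num.Theory.

(* Let S = V_2 be the set of vertices of value 2 of f.  Minimality of the
   weight forces f to be the "normal form" of S: 2 on S, 0 on vertices with a
   neighbour in S, 1 elsewhere.  Encoding column j by its profile
   (v_j \in S, u_j \in S), the weight and the values 2 r_f of the two vertices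
   of column j+2 are functions of the profiles of columns j..j+4.  Replacing
   the profile of column m+4 changes only the weights of columns m+2..m+6, so
   minimality of (weight, |V_2|) becomes a decidable condition [loc9] on the
   nine profiles of columns m..m+8, valid for every m.

   The combinatorial core is a statement about strips of 25 profiles: if
   every 9-window is locally optimal and the middle window of 7 columns has
   total 2 r_f equal to 1, the outer windows have totals (>= 2, >= 3) or
   (>= 3, >= 2).  One half of it is checked by a certified exhaustive
   depth-first search over profile strings; the other half follows by
   reversing the strip.  For n >= 7 the three windows V'(i-7,7), V'(i,7),
   V'(i+7,7) read 25 consecutive columns of the cyclic profile sequence; for
   n in {5, 6} the window V'(i,7) is the whole graph, and an exhaustive check
   of cyclic profile sequences shows that r_f of the whole graph is never 1/2. *)

(* The profile of a column: whether its outer vertex v and inner vertex u are in V_2. *)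
Definition profile : Type := (bool * bool)%type.

Definition profiles : seq profile :=
  [:: (false, false); (true, false); (false, true); (true, true)].

Lemma mem_profiles (x : profile) : x \in profiles.
Proof. by case: x => [[] []]. Qed.

Definition pnull : profile := (false, false).

Definition npc (c : profile) : nat := c.1 + c.2.

(* Weight and twice the r-value of a vertex, given whether it lies in V_2 and
   the number k of its neighbours in V_2. *)
Definition vcost (in2 : bool) (k : nat) : nat := if in2 then 2 else (k == 0).

Definition rhalf (in2 : bool) (k : nat) : nat :=
  if in2 then 0 else if k is k'.+1 then k' else 1.

(* Weight and twice the r-value of column c, given the profiles a b c d e of
   five consecutive columns: v_c is adjacent to v_b, v_d, u_c and u_c to
   u_a, u_e, v_c. *)
Definition cost5 (a b c d e : profile) : nat :=
  vcost c.1 (b.1 + d.1 + c.2) + vcost c.2 (a.2 + e.2 + c.1).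

Definition r5 (a b c d e : profile) : nat :=
  rhalf c.1 (b.1 + d.1 + c.2) + rhalf c.2 (a.2 + e.2 + c.1).

Definition W9 (a0 a1 a2 a3 a4 a5 a6 a7 a8 : profile) : nat :=
  cost5 a0 a1 a2 a3 a4 + cost5 a1 a2 a3 a4 a5 + cost5 a2 a3 a4 a5 a6
  + cost5 a3 a4 a5 a6 a7 + cost5 a4 a5 a6 a7 a8.

Definition loc9 (a0 a1 a2 a3 a4 a5 a6 a7 a8 : profile) : bool :=
  all (fun x =>
    let w := W9 a0 a1 a2 a3 a4 a5 a6 a7 a8 in
    let w' := W9 a0 a1 a2 a3 x a5 a6 a7 a8 in
    (w < w') || ((w == w') && (npc a4 <= npc x))) profiles.

Lemma cost5_rev (a b c d e : profile) : cost5 a b c d e = cost5 e d c b a.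
Proof. by rewrite /cost5 (addnC b.1) (addnC a.2). Qed.

Lemma r5_rev (a b c d e : profile) : r5 a b c d e = r5 e d c b a.
Proof. by rewrite /r5 (addnC b.1) (addnC a.2). Qed.

Lemma W9_rev (a0 a1 a2 a3 a4 a5 a6 a7 a8 : profile) :
  W9 a0 a1 a2 a3 a4 a5 a6 a7 a8 = W9 a8 a7 a6 a5 a4 a3 a2 a1 a0.
Proof.
rewrite /W9 !(cost5_rev a0) !(cost5_rev a1) !(cost5_rev a2) !(cost5_rev a3) !(cost5_rev a4).
lia.
Qed.

Lemma loc9_rev (a0 a1 a2 a3 a4 a5 a6 a7 a8 : profile) :
  loc9 a0 a1 a2 a3 a4 a5 a6 a7 a8 = loc9 a8 a7 a6 a5 a4 a3 a2 a1 a0.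
Proof. by apply: eq_all => x; rewrite (W9_rev a0) (W9_rev a0 a1 a2 a3 x). Qed.

Definition strip : Type := nat -> profile.

(* Twice the r-value of column j+2 of a strip. *)
Definition rcol (g : strip) (j : nat) : nat :=
  r5 (g j) (g (j + 1)) (g (j + 2)) (g (j + 3)) (g (j + 4)).

(* Local optimality of column b+4 of a strip. *)
Definition locopt (g : strip) (b : nat) : bool :=
  loc9 (g b) (g (b + 1)) (g (b + 2)) (g (b + 3)) (g (b + 4))
       (g (b + 5)) (g (b + 6)) (g (b + 7)) (g (b + 8)).

(* Twice the r-value of the seven columns a+2..a+8. *)
Definition window (g : strip) (a : nat) : nat := \sum_(q < 7) rcol g (a + q).

Lemma rcol_shift (g : strip) (s j : nat) : rcol (fun p => g (s + p)) j = rcol g (s + j).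
Proof. by rewrite /rcol !addnA. Qed.

Lemma locopt_shift (g : strip) (s b : nat) : locopt (fun p => g (s + p)) b = locopt g (s + b).
Proof. by rewrite /locopt !addnA. Qed.

(* Reversal of the 25 columns 0..24 exchanges the outer windows 0 and 14. *)
Definition rev_strip (g : strip) : strip := fun p => g (24 - p).

Lemma rcol_rev (g : strip) (j : nat) : j <= 20 -> rcol (rev_strip g) j = rcol g (20 - j).
Proof. by move=> j20; rewrite /rcol /rev_strip r5_rev; congr r5; congr g; lia. Qed.

Lemma locopt_rev (g : strip) (b : nat) : b <= 16 -> locopt (rev_strip g) b = locopt g (16 - b).
Proof. by move=> b16; rewrite /locopt /rev_strip loc9_rev; congr loc9; congr g; lia. Qed.

Lemma window_rev (g : strip) (a : nat) : a <= 14 -> window (rev_strip g) a = window g (14 - a).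
Proof.
move=> a14; rewrite /window [RHS](reindex_inj rev_ord_inj) /=.
apply: eq_bigr => q _; have := ltn_ord q => q7.
by rewrite rcol_rev; [congr rcol; lia | lia].
Qed.

Section Search.
Context {State : Type} (step : State -> profile -> option State).

Fixpoint accepts (s : State) (l : seq profile) : bool :=
  if l is x :: l' then (if step s x is Some s' then accepts s' l' else false) else true.

Fixpoint refutes (k : nat) (s : State) : bool :=
  if k is k'.+1 then
    all (fun x => if step s x is Some s' then refutes k' s' else true) profiles
  else false.

Lemma refutes_sound (s : State) (l : seq profile) : refutes (size l) s -> ~~ accepts s l.
Proof.
elim: l s => [|x l IH] s // => /allP/(_ x (mem_profiles x)).
by rewrite /=; case: (step s x) => // s'; exact: IH.
Qed.

End Search.

(* The search for strips violating the left half of the conclusion.  The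
   state after t profiles records t, the profiles read (most recent first)
   and the partial totals of the windows 0, 7 and 14. *)
Record scan := Scan {
  scan_len : nat; scan_prefix : seq profile;
  scan_left : nat; scan_mid : nat; scan_right : nat }.

(* rcol of the last column whose r-value is determined by the prefix. *)
Definition last_r (rp : seq profile) : nat :=
  if 5 <= size rp then
    r5 (nth pnull rp 4) (nth pnull rp 3) (nth pnull rp 2) (nth pnull rp 1) (nth pnull rp 0)
  else 0.

Definition last_locopt (rp : seq profile) : bool :=
  if 9 <= size rp then
    loc9 (nth pnull rp 8) (nth pnull rp 7) (nth pnull rp 6) (nth pnull rp 5)
         (nth pnull rp 4) (nth pnull rp 3) (nth pnull rp 2) (nth pnull rp 1) (nth pnull rp 0)
  else true.

(* After t profiles, r is twice the r-value of column t - 3; add it to the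
   total of window a (columns a+2..a+8) when that column belongs to it. *)
Definition accum (a t r acc : nat) : nat :=
  if (a + 5 <= t) && (t <= a + 11) then acc + r else acc.

(* Failure of "left >= 2 and (left >= 3 or right >= 3)"; it is downward closed. *)
Definition weak_sides (sl sr : nat) : bool := (sl <= 1) || ((sl <= 2) && (sr <= 2)).

Lemma weak_sides_mono (sl sr sl' sr' : nat) :
  sl <= sl' -> sr <= sr' -> weak_sides sl' sr' -> weak_sides sl sr.
Proof. rewrite /weak_sides; lia. Qed.

Definition scan_step (s : scan) (x : profile) : option scan :=
  let t := (scan_len s).+1 in
  let rp := x :: scan_prefix s in
  let r := last_r rp in
  let s' := Scan t rp (accum 0 t r (scan_left s)) (accum 7 t r (scan_mid s))
                 (accum 14 t r (scan_right s)) in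
  if [&& last_locopt rp, scan_mid s' <= 1, (t == 18) ==> (scan_mid s' == 1)
       & weak_sides (scan_left s') (scan_right s')]
  then Some s' else None.

Lemma exhaustive_scan : refutes scan_step 25 (Scan 0 [::] 0 0 0).
Proof. vm_compute; reflexivity. Qed.

(* Soundness of the search: a strip satisfying the hypotheses and violating
   the conclusion would be accepted.  [partial a t] is the part of window a
   determined by the first t profiles of g. *)
Section ScanInvariant.
Variable g : strip.

Fixpoint partial (a t : nat) : nat :=
  if t is t'.+1 then accum a t (rcol g (t - 5)) (partial a t') else 0.

Definition scan_at (t : nat) : scan :=
  Scan t (rev (mkseq g t)) (partial 0 t) (partial 7 t) (partial 14 t).

Lemma partial_mono (a : nat) {t t' : nat} : t <= t' -> partial a t <= partial a t'.
Proof.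
apply: (homo_leq (f := partial a) (r := leq)) => [//|y x z|{}t]; first exact: leq_trans.
by rewrite [partial a t.+1]/= /accum; case: ifP => _; [exact: leq_addr|].
Qed.

Lemma partial_settled (a k : nat) : partial a (a + 11 + k) = partial a (a + 11).
Proof.
elim: k => [|k IH]; first by rewrite addn0.
by rewrite addnS [partial a _.+1]/= /accum IH; case: ifP => // /andP[_]; lia.
Qed.

Lemma partial_window :
  [/\ partial 0 25 = window g 0, partial 7 25 = window g 7 & partial 14 25 = window g 14].
Proof. by rewrite /window !big_ord_recr !big_ord0 /=; split; reflexivity. Qed.

Lemma nth_rev_mkseq (t q : nat) : q < t -> nth pnull (rev (mkseq g t)) q = g (t - q.+1).
Proof. by move=> qt; rewrite nth_rev size_mkseq // nth_mkseq //; lia. Qed.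

Lemma accum_last_r (a t acc : nat) :
  accum a t (last_r (rev (mkseq g t))) acc = accum a t (rcol g (t - 5)) acc.
Proof.
rewrite /accum /last_r size_rev size_mkseq; case: (leqP 5 t) => t5; last first.
  by case: ifP => // /andP[]; lia.
rewrite !nth_rev_mkseq; try lia.
by rewrite /rcol; congr (if _ then _ + r5 _ _ _ _ _ else _); congr g; lia.
Qed.

Lemma last_locopt_prefix (t : nat) :
  last_locopt (rev (mkseq g t)) = (9 <= t) ==> locopt g (t - 9).
Proof.
rewrite /last_locopt size_rev size_mkseq; case: (leqP 9 t) => //= t9.
rewrite !nth_rev_mkseq; try lia.
by rewrite /locopt; congr loc9; congr g; lia.
Qed.

Hypothesis g_locopt : forall b, b <= 16 -> locopt g b.
Hypothesis g_mid : window g 7 = 1.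
Hypothesis g_weak : weak_sides (window g 0) (window g 14).

Lemma scan_step_at (t : nat) : t < 25 -> scan_step (scan_at t) (g t) = Some (scan_at t.+1).
Proof.
move=> t25; have [P0 P7 P14] := partial_window.
have prefixS : g t :: rev (mkseq g t) = rev (mkseq g t.+1) by rewrite mkseqS rev_rcons.
have partialS a : accum a t.+1 (last_r (rev (mkseq g t.+1))) (partial a t) = partial a t.+1.
  by rewrite accum_last_r.
rewrite /scan_step /scan_at /= prefixS !partialS ifT //.
apply/and4P; split.
- by rewrite last_locopt_prefix; apply/implyP => t9; apply: g_locopt; lia.
- by move: (partial_mono 7 t25); rewrite P7 g_mid.
- by apply/implyP => /eqP ->; rewrite -(partial_settled 7 7) P7 g_mid.
- by apply: weak_sides_mono g_weak; [rewrite -P0 | rewrite -P14]; exact: partial_mono t25.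
Qed.

Lemma accepts_from (t k : nat) : t + k = 25 -> accepts scan_step (scan_at t) (map g (iota t k)).
Proof.
elim: k t => [|k IH] t tk //.
have -> : map g (iota t k.+1) = g t :: map g (iota t.+1 k) by [].
by rewrite /= scan_step_at; [apply: IH | ]; lia.
Qed.

End ScanInvariant.

Lemma strip_left (g : strip) : (forall b, b <= 16 -> locopt g b) -> window g 7 = 1 ->
  ~~ weak_sides (window g 0) (window g 14).
Proof.
move=> hloc hmid; apply/negP => hweak.
have := refutes_sound scan_step (scan_at g 0) (map g (iota 0 25)).
by rewrite size_map size_iota accepts_from // => /(_ exhaustive_scan).
Qed.

Lemma strip_windows (g : strip) : (forall b, b <= 16 -> locopt g b) -> window g 7 = 1 ->
  (2 <= window g 0 /\ 3 <= window g 14) \/ (3 <= window g 0 /\ 2 <= window g 14).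
Proof.
move=> hloc hmid.
have hloc' b : b <= 16 -> locopt (rev_strip g) b.
  by move=> b16; rewrite locopt_rev // hloc // leq_subr.
have R0 : window (rev_strip g) 0 = window g 14 by exact: window_rev.
have R7 : window (rev_strip g) 7 = window g 7 by exact: window_rev.
have R14 : window (rev_strip g) 14 = window g 0 by exact: window_rev.
have := strip_left g hloc hmid; have := strip_left (rev_strip g) hloc' (etrans R7 hmid).
by rewrite R0 R14 /weak_sides; lia.
Qed.

Fixpoint all_strings (k : nat) : seq (seq profile) :=
  if k is k'.+1 then [seq x :: s | x <- profiles, s <- all_strings k'] else [:: [::]].

Lemma all_stringsP (l : seq profile) : l \in all_strings (size l).
Proof.
elim: l => [|x l IH] //.
by apply: (allpairs_f (fun x s => x :: s)); [exact: mem_profiles | exact: IH].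
Qed.

Definition cyclic_strip (l : seq profile) : strip := fun q => nth pnull l (q %% size l).

Definition cycle_feasible (l : seq profile) : bool :=
  all (locopt (cyclic_strip l)) (iota 0 (size l)) &&
  (sumn [seq rcol (cyclic_strip l) b | b <- iota 0 (size l)] == 1).

Lemma no_short_cycle (k : nat) : k \in [:: 5; 6] ->
  all (fun l => ~~ cycle_feasible l) (all_strings k).
Proof. by rewrite !inE => /orP[] /eqP ->; vm_compute; reflexivity. Qed.

Lemma periodic_strip_sum (g : strip) (k : nat) : k \in [:: 5; 6] ->
  (forall j, g (j + k) = g j) -> (forall b, locopt g b) ->
  forall s, \sum_(q < k) rcol g (s + q) != 1.
Proof.
move=> hk per hloc s; pose h p := g (s + p).
have k0 : 0 < k by move: hk; rewrite !inE => /orP[] /eqP ->.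
have per_mul j q : h (j + q * k) = h j.
  by elim: q => [|q IH]; rewrite ?mul0n ?addn0 // /h mulSnr !addnA per -addnA.
have hmod j : h j = h (j %% k) by rewrite {1}(divn_eq j k) addnC per_mul.
set l := mkseq h k.
have El : cyclic_strip l =1 h.
  by move=> j; rewrite /cyclic_strip size_mkseq nth_mkseq ?ltn_pmod // -hmod.
have Eloc : locopt (cyclic_strip l) =1 locopt h by move=> j; rewrite /locopt !El.
have Er : rcol (cyclic_strip l) =1 rcol h by move=> j; rewrite /rcol !El.
have lk : l \in all_strings k by have := all_stringsP l; rewrite size_mkseq.
have := allP (no_short_cycle k hk) l lk.
apply: contra => hsum; rewrite /cycle_feasible size_mkseq (eq_all Eloc) (eq_map Er).
have -> : iota 0 k = index_iota 0 k by rewrite /index_iota subn0.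
rewrite sumnE big_map big_mkord.
under eq_bigr do rewrite rcol_shift.
rewrite (eqP hsum) eqxx andbT.
by apply/allP => b _; rewrite locopt_shift.
Qed.

Lemma sum_agree_off {T : finType} {A : {set T}} {h1 h2 : T -> nat} :
  (forall a, a \notin A -> h1 a = h2 a) ->
  \sum_a h1 a + \sum_(a in A) h2 a = \sum_a h2 a + \sum_(a in A) h1 a.
Proof.
move=> off; rewrite !(bigID (mem A) predT) /=.
have -> : \sum_(i | i \notin A) h1 i = \sum_(i | i \notin A) h2 i.
  by apply: eq_bigr => a /off.
lia.
Qed.

Section Columns.
Variable n : nat.
Hypothesis n_ge5 : 5 <= n.

Lemma n_gt0 : 0 < n. Proof. exact: leq_trans n_ge5. Qed.

Definition cyc (j : nat) : 'I_n := Ordinal (ltn_pmod j n_gt0).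

Lemma cyc_eq (j k : nat) : (cyc j == cyc k) = (j == k %[mod n]).
Proof. by []. Qed.

Lemma cyc_addn (j : nat) : cyc (j + n) = cyc j.
Proof. by apply: val_inj; rewrite /= modnDr. Qed.

Lemma cyc_inj (m k k' : nat) : k < n -> k' < n -> cyc (m + k) = cyc (m + k') -> k = k'.
Proof. by move=> kn kn' /eqP; rewrite cyc_eq eqn_modDl !modn_small // => /eqP. Qed.

Lemma cyc_shift_neq (j d : nat) : 0 < d < n -> cyc j != cyc (j + d).
Proof.
move=> /andP[d0 dn]; rewrite cyc_eq -{1}(addn0 j) eqn_modDl mod0n modn_small //.
by rewrite eq_sym -lt0n.
Qed.

Lemma cyc_offset (j d : nat) : d <= 8 -> (cyc (j + d) == cyc (j + 4)) = (d == 4).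
Proof.
move=> d8; case: (ltngtP d 4) => [d4|d4|->]; last by rewrite eqxx.
- apply/negbTE.
  have := @cyc_shift_neq (j + d) (4 - d); rewrite -addnA subnKC ?(ltnW d4) //; apply; lia.
- apply/negbTE; rewrite eq_sym.
  have := @cyc_shift_neq (j + 4) (d - 4); rewrite -addnA subnKC ?(ltnW d4) //; apply; lia.
Qed.

Lemma cyc_below (a : 'I_n) : cyc (a + n - 2 + 2) = a.
Proof.
apply: val_inj => /=; rewrite subnK; last by apply: leq_trans (leq_addl _ _); lia.
by rewrite modnDr modn_small.
Qed.

Lemma nbr_v (j : nat) (w : pvert n) : P2adj n (false, cyc (j + 1)) w =
  [|| w == (false, cyc j), w == (false, cyc (j + 2)) | w == (true, cyc (j + 1))].
Proof.
case: w => [[] c]; rewrite /P2adj /gp_adj /=.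
  by rewrite xpair_eqE /= -val_eqE /= eq_sym.
rewrite !xpair_eqE /= orbF orbC; congr (_ || _).
- by rewrite eqn_modDr -val_eqE /= (modn_small (ltn_ord c)) eq_sym.
- by rewrite -val_eqE /= modnDml -addnA.
Qed.

Lemma nbr_u (j : nat) (w : pvert n) : P2adj n (true, cyc (j + 2)) w =
  [|| w == (true, cyc j), w == (true, cyc (j + 4)) | w == (false, cyc (j + 2))].
Proof.
case: w => [[] c]; rewrite /P2adj /gp_adj /=; last first.
  by rewrite xpair_eqE /= -val_eqE /= eq_sym.
rewrite !xpair_eqE /= orbF orbC; congr (_ || _).
- by rewrite eqn_modDr -val_eqE /= (modn_small (ltn_ord c)) eq_sym.
- by rewrite -val_eqE /= modnDml -addnA.
Qed.

Definition nbrs3 (w x1 x2 x3 : pvert n) : Prop :=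
  (forall w', P2adj n w w' = [|| w' == x1, w' == x2 | w' == x3]) /\ uniq [:: x1; x2; x3].

Lemma nbrs3_v (j : nat) :
  nbrs3 (false, cyc (j + 1)) (false, cyc j) (false, cyc (j + 2)) (true, cyc (j + 1)).
Proof.
split; first by move=> w; rewrite nbr_v.
by rewrite /= !inE !xpair_eqE /= andbT orbF; apply: cyc_shift_neq; lia.
Qed.

Lemma nbrs3_u (j : nat) :
  nbrs3 (true, cyc (j + 2)) (true, cyc j) (true, cyc (j + 4)) (false, cyc (j + 2)).
Proof.
split; first by move=> w; rewrite nbr_u.
by rewrite /= !inE !xpair_eqE /= andbT orbF; apply: cyc_shift_neq; lia.
Qed.

Definition dominated (S : pvert n -> bool) (w : pvert n) : bool :=
  [exists w', P2adj n w w' && S w'].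

Definition rdf_of (S : pvert n -> bool) (w : pvert n) : nat :=
  if S w then 2 else if dominated S w then 0 else 1.

Lemma rdf_of_RDF (S : pvert n -> bool) : is_RDF n (rdf_of S).
Proof.
move=> w; rewrite /rdf_of; split; first by case: (S w) => //; case: (dominated S w).
case: (S w) => //; case D: (dominated S w) => // _.
case/existsP: D => w' /andP[adj Sw']; exists w'; split => //.
by rewrite /rdf_of Sw'.
Qed.

Lemma Vset_rdf_of (S : pvert n -> bool) : Vset n (rdf_of S) 2 = [set w | S w].
Proof.
by apply/setP => w; rewrite !inE /rdf_of; case: (S w) => //; case: (dominated S w).
Qed.

Lemma rdf_of_vertex (S : pvert n -> bool) {w x1 x2 x3 : pvert n} : nbrs3 w x1 x2 x3 ->
  rdf_of S w = vcost (S w) (S x1 + S x2 + S x3).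
Proof.
move=> [adj _]; rewrite /rdf_of /vcost; case: (S w) => //.
have -> : dominated S w = [|| S x1, S x2 | S x3].
  apply/existsP/idP => [[w' /andP[]]|].
    by rewrite adj => /or3P[] /eqP -> ->; rewrite ?orbT.
  by case/or3P => h; [exists x1|exists x2|exists x3]; rewrite adj eqxx ?orbT h.
by case: (S x1); case: (S x2); case: (S x3).
Qed.

Definition pcol (S : pvert n -> bool) (a : 'I_n) : profile := (S (false, a), S (true, a)).

Definition prof (S : pvert n -> bool) (j : nat) : profile := pcol S (cyc j).

Definition colw (S : pvert n -> bool) (a : 'I_n) : nat :=
  rdf_of S (false, a) + rdf_of S (true, a).

Lemma colw_cost5 (S : pvert n -> bool) (j : nat) : colw S (cyc (j + 2)) =
  cost5 (prof S j) (prof S (j + 1)) (prof S (j + 2)) (prof S (j + 3)) (prof S (j + 4)).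
Proof.
have [E2 E3] : j + 2 = j + 1 + 1 /\ j + 3 = j + 1 + 2 by lia.
rewrite /colw (rdf_of_vertex S (nbrs3_u j)) {1}E2 (rdf_of_vertex S (nbrs3_v (j + 1))).
by rewrite -E2 -E3.
Qed.

Lemma sum_pvert (R : Type) (idx : R) (op : Monoid.com_law idx) (G : pvert n -> R) :
  \big[op/idx]_(w : pvert n) G w = \big[op/idx]_(a : 'I_n) op (G (false, a)) (G (true, a)).
Proof.
have -> : \big[op/idx]_(w : pvert n) G w =
    \big[op/idx]_(p : bool * 'I_n | xpredT p.1 && xpredT p.2) G (p.1, p.2).
  by apply: eq_bigr => -[b a].
rewrite -(pair_big xpredT xpredT (fun b a => G (b, a))) /= big_bool /=.
by rewrite -big_split /=; apply: eq_bigr => a _; exact: Monoid.mulmC.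
Qed.

Lemma weight_rdf_of (S : pvert n -> bool) : weight n (rdf_of S) = \sum_a colw S a.
Proof. by rewrite /weight sum_pvert. Qed.

Lemma card_V2 (S : pvert n -> bool) : #|[set w | S w]| = \sum_a npc (pcol S a).
Proof.
rewrite -sum1_card big_mkcond /= sum_pvert; apply: eq_bigr => a _.
by rewrite !inE /npc /=; case: (S (false, a)); case: (S (true, a)).
Qed.

Definition set_col (S : pvert n -> bool) (k : nat) (x : profile) : pvert n -> bool :=
  fun w => if w.2 == cyc k then (if w.1 then x.2 else x.1) else S w.

Lemma pcol_set_col (S : pvert n -> bool) (k : nat) (x : profile) (a : 'I_n) :
  pcol (set_col S k x) a = if a == cyc k then x else pcol S a.
Proof. by rewrite /pcol /set_col /=; case: ifP => // _; case: x. Qed.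

(* The columns m+2..m+6, the only ones whose weight reads column m+4. *)
Definition near_cols (m : nat) : {set 'I_n} := [set cyc (m + 2 + val k) | k : 'I_5].

Lemma sum_near_cols (S : pvert n -> bool) (m : nat) :
  \sum_(a in near_cols m) colw S a =
  W9 (prof S m) (prof S (m + 1)) (prof S (m + 2)) (prof S (m + 3)) (prof S (m + 4))
     (prof S (m + 5)) (prof S (m + 6)) (prof S (m + 7)) (prof S (m + 8)).
Proof.
have shift k : m + 2 + k = (m + k) + 2 by lia.
rewrite big_imset /=; last first.
  move=> k k' _ _ /cyc_inj E.
  by apply: val_inj; apply: E; exact: leq_trans (ltn_ord _) n_ge5.
rewrite !big_ord_recr big_ord0 /= !shift !colw_cost5 /W9 add0n addn0.
by rewrite -!addnA.
Qed.

Lemma near_cols_mem (m j e : nat) :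
  e <= 4 -> cyc (j + e) = cyc (m + 4) -> cyc (j + 2) \in near_cols m.
Proof.
move=> e4 /eqP; rewrite cyc_eq => E; have lt5 : 4 - e < 5 by lia.
apply/imsetP; exists (Ordinal lt5) => //; apply/eqP; rewrite cyc_eq /= -(eqn_modDr e).
rewrite (_ : j + 2 + e = j + e + 2) 1?(_ : m + 2 + (4 - e) + e = m + 4 + 2); try lia.
by rewrite -modnDml (eqP E) modnDml.
Qed.

Lemma colw_set_col_far (S : pvert n -> bool) (m : nat) (x : profile) (a : 'I_n) :
  a \notin near_cols m -> colw (set_col S (m + 4) x) a = colw S a.
Proof.
move=> aC; rewrite -(cyc_below a) !colw_cost5 /prof !pcol_set_col.
have far e : e <= 4 -> (cyc (a + n - 2 + e) == cyc (m + 4)) = false.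
  by move=> e4; apply/negbTE/eqP => /(near_cols_mem m _ _ e4); rewrite cyc_below; exact/negP.
by rewrite -{1}(addn0 (a + n - 2)) !far.
Qed.

Lemma weight_set_col (S : pvert n -> bool) (m : nat) (x : profile) :
  weight n (rdf_of (set_col S (m + 4) x)) +
    W9 (prof S m) (prof S (m + 1)) (prof S (m + 2)) (prof S (m + 3)) (prof S (m + 4))
       (prof S (m + 5)) (prof S (m + 6)) (prof S (m + 7)) (prof S (m + 8)) =
  weight n (rdf_of S) +
    W9 (prof S m) (prof S (m + 1)) (prof S (m + 2)) (prof S (m + 3)) x
       (prof S (m + 5)) (prof S (m + 6)) (prof S (m + 7)) (prof S (m + 8)).
Proof.
have prof_set e : e <= 8 ->
    prof (set_col S (m + 4) x) (m + e) = if e == 4 then x else prof S (m + e).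
  by move=> e8; rewrite /prof pcol_set_col cyc_offset.
have prof_set0 : prof (set_col S (m + 4) x) m = prof S m.
  by have := prof_set 0 isT; rewrite addn0.
have := sum_agree_off (colw_set_col_far S m x).
by rewrite !weight_rdf_of !sum_near_cols prof_set0 !prof_set.
Qed.

Lemma card_set_col (S : pvert n -> bool) (m : nat) (x : profile) :
  #|[set w | set_col S (m + 4) x w]| + npc (prof S (m + 4)) = #|[set w | S w]| + npc x.
Proof.
have off a : a \notin [set cyc (m + 4)] ->
    npc (pcol (set_col S (m + 4) x) a) = npc (pcol S a).
  by rewrite in_set1 pcol_set_col => /negbTE ->.
by have := sum_agree_off off; rewrite !card_V2 !big_set1 pcol_set_col eqxx.
Qed.

(* The columns of the window V'(j, t) when j = m + 2 (mod n). *)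
Definition cols_from (m t : nat) : {set 'I_n} := [set cyc (m + 2 + val k) | k : 'I_t].

Lemma sum_cols (R : Type) (idx : R) (op : Monoid.com_law idx) (m t : nat) (F : pvert n -> R) :
  t <= n ->
  \big[op/idx]_(w in [set w : pvert n | w.2 \in cols_from m t]) F w =
  \big[op/idx]_(k < t) op (F (false, cyc (m + 2 + k))) (F (true, cyc (m + 2 + k))).
Proof.
move=> tn; rewrite big_mkcond /= sum_pvert.
rewrite (eq_bigr (fun a => if a \in cols_from m t then op (F (false, a)) (F (true, a)) else idx)).
  rewrite -big_mkcond big_imset //= => k k' _ _ /cyc_inj E.
  by apply: val_inj; apply: E; exact: leq_trans (ltn_ord _) tn.
by move=> a _; rewrite !inE /=; case: (a \in cols_from m t); rewrite ?Monoid.mul1m.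
Qed.

Lemma cols_from_all (m t : nat) : n <= t -> cols_from m t = setT.
Proof.
move=> nt; apply/eqP; rewrite eqEcard subsetT cardsT card_ord /=.
have card_n : #|cols_from m n| = n.
  rewrite card_imset ?card_ord // => k k' /cyc_inj E.
  by apply: val_inj; apply: E; exact: ltn_ord.
rewrite -[X in X <= _]card_n; apply: subset_leq_card.
by apply/subsetP => _ /imsetP[k _ ->]; apply/imsetP; exists (widen_ord nt k).
Qed.

Lemma cols_from_minn (m : nat) : cols_from m 7 = cols_from m (minn 7 n).
Proof. by case: (leqP 7 n) => // n7; rewrite !cols_from_all // ltnW. Qed.

Lemma Vp_cols (j : int) (m : nat) : (j = (m + 2)%:Z %[mod n])%Z ->
  Vp n j 7 = [set w : pvert n | w.2 \in cols_from m 7].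
Proof.
move=> hj; apply/setP => -[b c]; rewrite !inE /=.
have cond (c' : 'I_n) (k : nat) :
    ((c' : nat)%:Z == (j + k%:Z)%R %[mod n])%Z = (c' == cyc (m + 2 + k)).
  rewrite -val_eqE /= modz_nat (modn_small (ltn_ord c')) -modzDml hj modzDml -PoszD.
  by rewrite modz_nat eqz_nat.
apply/existsP/imsetP => [[k hk]|[k _ ->]].
  by exists k => //; apply/eqP; rewrite -(cond c k).
by exists k; exact: etrans (cond _ k) (eqxx _).
Qed.

Section Minimal.
Variable f : pvert n -> nat.
Hypothesis hf : is_min_RDF_minV2 n f.

Let S : pvert n -> bool := fun w => f w == 2.

(* A vertex of value 1 with a neighbour in V_2 could be lowered to 0. *)
Lemma one_undominated (w : pvert n) : f w = 1 -> ~~ dominated S w.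
Proof.
have [[rdf minw] _] := hf; move=> fw1; apply/negP => /existsP[w' /andP[adj fw']].
pose g z := if z == w then 0 else f z.
have rdf_g : is_RDF n g.
  move=> z; rewrite /g; case: eqP => [->|/eqP zw]; split => //.
  - move=> _; exists w'; split => //; case: eqP => [ww'|_]; last exact/eqP.
    by move: fw'; rewrite /S ww' fw1.
  - by case: (rdf z).
  - move=> /(proj2 (rdf z)) [w'' [adj'' fw'']]; exists w''; split => //.
    by case: eqP => [ww''|//]; move: fw1; rewrite -ww'' fw''.
have := minw g rdf_g; rewrite /weight (bigD1 w) //= [X in _ <= X](bigD1 w) //=.
have -> : \sum_(z | z != w) g z = \sum_(z | z != w) f z.
  by apply: eq_bigr => z /negbTE zw; rewrite /g zw.
by rewrite [g w]/g eqxx fw1 add0n add1n ltnn.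
Qed.

Lemma normal_form (w : pvert n) : f w = rdf_of S w.
Proof.
have [[rdf _] _] := hf; have [le2 dom0] := rdf w.
rewrite /rdf_of /S; case: eqP => // f2.
have [fw|fw] : f w = 0 \/ f w = 1 by lia.
- have [w' [adj fw']] := dom0 fw.
  suff -> : dominated S w by [].
  by apply/existsP; exists w'; rewrite adj /S fw' eqxx.
- by rewrite fw (negbTE (one_undominated w fw)).
Qed.

Lemma local_optimality (m : nat) : locopt (prof S) m.
Proof.
have [[_ minw] minv] := hf.
have wf : weight n f = weight n (rdf_of S) by apply: eq_bigr => w _; exact: normal_form.
rewrite /locopt /loc9; apply/allP => x _; cbv beta zeta.
have W := weight_set_col S m x; have C := card_set_col S m x.
set Wold := W9 _ _ _ _ (prof S (m + 4)) _ _ _ _ in W *.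
set Wnew := W9 _ _ _ _ x _ _ _ _ in W *.
have le := minw _ (rdf_of_RDF (set_col S (m + 4) x)); rewrite wf in le.
case: (ltngtP Wold Wnew) => //= [lt|eq]; first by lia.
have gam : is_gammaR_RDF n (rdf_of (set_col S (m + 4) x)).
  by split; [exact: rdf_of_RDF | move=> h rdf_h; have := minw h rdf_h; lia].
by have := minv _ gam; rewrite Vset_rdf_of (_ : Vset n f 2 = [set w | S w]) //; lia.
Qed.

Lemma card_nbrs_V2 {w x1 x2 x3 : pvert n} : nbrs3 w x1 x2 x3 ->
  #|[set w' | P2adj n w w' && (w' \in Vset n f 2)]| = S x1 + S x2 + S x3.
Proof.
move=> [adj uq].
have -> : #|[set w' | P2adj n w w' && (w' \in Vset n f 2)]| =
          #|[seq z <- [:: x1; x2; x3] | S z]|.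
  by apply: eq_card => z; rewrite !inE adj mem_filter !inE andbC.
by rewrite (card_uniqP _) ?filter_uniq // size_filter /= addn0 addnA.
Qed.

Lemma r_f_vertex {w x1 x2 x3 : pvert n} : nbrs3 w x1 x2 x3 ->
  r_f n f w = ((rhalf (S w) (S x1 + S x2 + S x3)%N)%:R / 2)%R.
Proof.
move=> nb; rewrite /r_f /g_f (card_nbrs_V2 nb) /rhalf.
have := normal_form w; rewrite (rdf_of_vertex S nb) /vcost /S.
case: (f w == 2) => /= [_|->]; first by rewrite subrr mul0r.
by case: (_ + _ + _)%N => [|k] /=; [lra | rewrite -[k.+1]addn1 natrD; lra].
Qed.

Lemma r_f_column (j : nat) :
  (r_f n f (false, cyc (j + 2)%N) + r_f n f (true, cyc (j + 2)%N) =
   (rcol (prof S) j)%:R / 2)%R.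
Proof.
have [E2 E3] : j + 2 = j + 1 + 1 /\ j + 3 = j + 1 + 2 by lia.
rewrite (r_f_vertex (nbrs3_u j)) {1}E2 (r_f_vertex (nbrs3_v (j + 1))) -E2 -E3.
by rewrite -mulrDl -natrD.
Qed.

Lemma r_window (j : int) (m : nat) : (j = (m + 2)%:Z %[mod n])%Z ->
  r_fS n f (Vp n j 7) = ((\sum_(k < minn 7 n) rcol (prof S) (m + k))%N%:R / 2)%R.
Proof.
move=> hj; rewrite /r_fS (Vp_cols _ _ hj) cols_from_minn sum_cols ?geq_minr //.
rewrite natr_sum mulr_suml; apply: eq_bigr => k _.
by rewrite -r_f_column (addnAC m 2 k).
Qed.

End Minimal.

End Columns.

Local Open Scope ring_scope.

Theorem lemma2p9 (n : nat) (hn : (5 <= n)%N) (f : pvert n -> nat)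
  (hf : is_min_RDF_minV2 n f) (i : int) :
  r_fS n f (Vp n i 7) = 1 / 2 ->
  (1 <= r_fS n f (Vp n (i - 7) 7) /\ 3 / 2 <= r_fS n f (Vp n (i + 7) 7)) \/
  (3 / 2 <= r_fS n f (Vp n (i - 7) 7) /\ 1 <= r_fS n f (Vp n (i + 7) 7)).
Proof.
move=> mid.
(* Column p of the strip g is column i - 9 + p of P(n,2); window a of g is V'(i - 7 + a, 7). *)
have [B EB] : exists B : nat, ((i - 9) %% n)%Z = B%:Z.
  by exists `|((i - 9) %% n)%Z|%N; rewrite gez0_abs // modz_ge0 // eqz_nat; lia.
pose g : strip := fun p => prof n hn (fun w => f w == 2%N) (B + p).
have win (c : int) (a : nat) : c = i - 9 + (a + 2)%N%:Z ->
    r_fS n f (Vp n c 7) = (\sum_(k < minn 7 n) rcol g (a + k))%N%:R / 2.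
  move=> ->; rewrite (r_window n hn f hf _ (B + a)%N); last first.
    by rewrite -modzDml EB -PoszD addnA.
  by congr (_%:R / 2); apply: eq_bigr => k _; rewrite rcol_shift addnA.
rewrite (win i 7%N) ?(win (i - 7) 0%N) ?(win (i + 7) 14%N) in mid *; try lia.
have g_loc b : locopt g b by rewrite locopt_shift; exact: local_optimality.
case: (leqP 7 n) mid => n7 mid.
- rewrite -/(window g 7) -/(window g 0) -/(window g 14) in mid *.
  have mid1 : window g 7 = 1%N by apply/eqP; rewrite -(eqr_nat rat); apply/eqP; lra.
  have [[l r]|[l r]] := strip_windows g (fun b _ => g_loc b) mid1;
    rewrite -(ler_nat rat) in l; rewrite -(ler_nat rat) in r; [left|right]; split; lra.
- have n56 : n \in [:: 5; 6]%N by rewrite !inE; lia.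
  have per j : g (j + n)%N = g j by rewrite /g /prof addnA cyc_addn.
  have := periodic_strip_sum g n n56 per g_loc 7; rewrite -(eqr_nat rat).
  by move/eqP; lra.
Qed.
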